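(* Let $L$ be a BL-comet. Then $L$ is a BL-chain if and only if $\mathrm{pivot}(L)^{\ast\ast}=\mathrm{pivot}(L)$.
   Context: A (commutative) residuated lattice is an algebra $(L,\wedge,\vee,\odot,\rightarrow,0,1)$ such that $(L,\wedge,\vee,0,1)$ is a bounded lattice, $(L,\odot,1)$ is a commutative ordered monoid, and $z\le x\rightarrow y$ iff $x\odot z\le y$ for all $x,y,z\in L$. For $x\in L$ put $x^\ast=x\rightarrow 0$. A BL-algebra is a residuated lattice satisfying $(x\rightarrow y)\vee(y\rightarrow x)=1$ (prelinearity) and $x\odot(x\rightarrow y)=x\wedge y$ (divisibility). A BL-chain is a BL-algebra whose lattice order is total. An element $x$ is idempotent if $x\odot x=x$. For a finite BL-algebra $L$, let $\mathcal{I}(L)$ be its set of idempotent elements; for $x\in\mathcal{I}(L)$ let $\mathcal{C}(x)=\{y\in\mathcal{I}(L): x,y \text{ comparable}\}$; let $\mathcal{D}(L)$ be the set of $x\in\mathcal{I}(L)$ such that $\mathcal{C}(x)=\mathcal{I}(L)$ and $\{y\in\mathcal{I}(L): y\le x\}$ is a chain ($0\in\mathcal{D}(L)$). A finite BL-algebra $L$ is a BL-comet if $\max\mathcal{D}(L)\neq 0$; in that case $\mathrm{pivot}(L)=\max\mathcal{D}(L)$. *)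

From mathcomp Require Import all_boot.
Set Implicit Arguments. Unset Strict Implicit. Unset Printing Implicit Defensive.

Record rl_ops (T : Type) := RLOps {
  rmeet : T -> T -> T;
  rjoin : T -> T -> T;
  rmul  : T -> T -> T;
  rimp  : T -> T -> T;
  rzero : T;
  rone  : T }.

Section BL.
Variables (T : finType) (A : rl_ops T).

Definition rle (x y : T) : Prop := rmeet A x y = x.

Definition residuated_lattice : Prop :=
  (forall x y z, rmeet A x (rmeet A y z) = rmeet A (rmeet A x y) z) /\
  (forall x y z, rjoin A x (rjoin A y z) = rjoin A (rjoin A x y) z) /\
  (forall x y, rmeet A x y = rmeet A y x) /\
  (forall x y, rjoin A x y = rjoin A y x) /\
  (forall x y, rmeet A x (rjoin A x y) = x) /\
  (forall x y, rjoin A x (rmeet A x y) = x) /\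
  (forall x, rle (rzero A) x) /\
  (forall x, rle x (rone A)) /\
  (forall x y z, rmul A x (rmul A y z) = rmul A (rmul A x y) z) /\
  (forall x y, rmul A x y = rmul A y x) /\
  (forall x, rmul A x (rone A) = x) /\
  (forall x y z, rle x y -> rle (rmul A x z) (rmul A y z)) /\
  (forall x y z, rle z (rimp A x y) <-> rle (rmul A x z) y).

Definition BL_algebra : Prop :=
  residuated_lattice /\
  (forall x y, rjoin A (rimp A x y) (rimp A y x) = rone A) /\
  (forall x y, rmul A x (rimp A x y) = rmeet A x y).

Definition rstar (x : T) : T := rimp A x (rzero A).

Definition BL_chain : Prop := BL_algebra /\ (forall x y, rle x y \/ rle y x).

Definition idempotent (x : T) : Prop := rmul A x x = x.

Definition comparable (x y : T) : Prop := rle x y \/ rle y x.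

Definition in_D (x : T) : Prop :=
  idempotent x /\
  (forall y, idempotent y -> comparable x y) /\
  (forall y z, idempotent y -> rle y x -> idempotent z -> rle z x ->
     comparable y z).

Definition is_max_D (p : T) : Prop :=
  in_D p /\ forall x, in_D x -> rle x p.

Definition BL_comet_with_pivot (p : T) : Prop :=
  BL_algebra /\ is_max_D p /\ p <> rzero A.

End BL.

From mathcomp Require Import all_boot.
Set Implicit Arguments. Unset Strict Implicit. Unset Printing Implicit Defensive.

(* In a BL-algebra the negation q = p* of an idempotent p is again idempotent
   and p ⊙ q = 0.  If p is a nonzero element of D(L), then p and q are
   comparable, which forces q = 0 and hence p** = 1; so p** = p means that the
   pivot is 1, i.e. that the idempotents of L form a chain.  Conversely, in a
   chain 1 itself lies in D(L).  It remains to see that L is a chain as soon as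
   its idempotents are: in a finite residuated lattice every element a lies
   above an idempotent power e of a, and if a ⊔ b = 1 then also e ⊔ b = 1.
   Applied to x → y and y → x, prelinearity yields idempotents e ≤ x → y and
   f ≤ y → x with e ⊔ f = 1; as e and f are comparable, one of them is 1. *)

Section BLAlgebra.
Variables (T : finType) (A : rl_ops T).

Local Notation "x ⊓ y" := (rmeet A x y) (at level 40, left associativity).
Local Notation "x ⊔ y" := (rjoin A x y) (at level 50, left associativity).
Local Notation "x ⊙ y" := (rmul A x y) (at level 40, left associativity).
Local Notation "x ⇒ y" := (rimp A x y) (at level 45, right associativity).
Local Notation "x ≤ y" := (rle A x y) (at level 70).
Local Notation "x ^*" := (rstar A x).
Local Notation zero := (rzero A).
Local Notation one := (rone A).

Hypothesis hRL : residuated_lattice A.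

Let meetA x y z : x ⊓ (y ⊓ z) = x ⊓ y ⊓ z.
Proof. by case: hRL => [ax _]; apply: ax. Qed.
Let joinA x y z : x ⊔ (y ⊔ z) = x ⊔ y ⊔ z.
Proof. by case: hRL => [_ [ax _]]; apply: ax. Qed.
Let meetC x y : x ⊓ y = y ⊓ x.
Proof. by case: hRL => [_ [_ [ax _]]]; apply: ax. Qed.
Let joinC x y : x ⊔ y = y ⊔ x.
Proof. by case: hRL => [_ [_ [_ [ax _]]]]; apply: ax. Qed.
Let meetKU x y : x ⊓ (x ⊔ y) = x.
Proof. by case: hRL => [_ [_ [_ [_ [ax _]]]]]; apply: ax. Qed.
Let joinKI x y : x ⊔ (x ⊓ y) = x.
Proof. by case: hRL => [_ [_ [_ [_ [_ [ax _]]]]]]; apply: ax. Qed.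
Let le0x x : zero ≤ x.
Proof. by case: hRL => [_ [_ [_ [_ [_ [_ [ax _]]]]]]]; apply: ax. Qed.
Let lex1 x : x ≤ one.
Proof. by case: hRL => [_ [_ [_ [_ [_ [_ [_ [ax _]]]]]]]]; apply: ax. Qed.
Let mulA x y z : x ⊙ (y ⊙ z) = x ⊙ y ⊙ z.
Proof. by case: hRL => [_ [_ [_ [_ [_ [_ [_ [_ [ax _]]]]]]]]]; apply: ax. Qed.
Let mulC x y : x ⊙ y = y ⊙ x.
Proof. by case: hRL => [_ [_ [_ [_ [_ [_ [_ [_ [_ [ax _]]]]]]]]]]; apply: ax. Qed.
Let mulx1 x : x ⊙ one = x.
Proof. by case: hRL => [_ [_ [_ [_ [_ [_ [_ [_ [_ [_ [ax _]]]]]]]]]]]; apply: ax. Qed.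
Let ler_mul2r x y z : x ≤ y -> x ⊙ z ≤ y ⊙ z.
Proof. by case: hRL => [_ [_ [_ [_ [_ [_ [_ [_ [_ [_ [_ [ax _]]]]]]]]]]]]; apply: ax. Qed.
Let residuation x y z : z ≤ x ⇒ y <-> x ⊙ z ≤ y.
Proof. by case: hRL => [_ [_ [_ [_ [_ [_ [_ [_ [_ [_ [_ [_ ax]]]]]]]]]]]]; apply: ax. Qed.

Lemma lexx x : x ≤ x.
Proof. by rewrite /rle -{2}(joinKI x x) meetKU. Qed.

Lemma le_anti x y : x ≤ y -> y ≤ x -> x = y.
Proof. by rewrite /rle => xy yx; rewrite -xy meetC yx. Qed.

Lemma le_trans y x z : x ≤ y -> y ≤ z -> x ≤ z.
Proof. by rewrite /rle => xy yz; rewrite -xy -meetA yz. Qed.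

Lemma le_joinE x y : x ≤ y <-> x ⊔ y = y.
Proof.
rewrite /rle; split=> [<- | <-]; last exact: meetKU.
by rewrite joinC meetC joinKI.
Qed.

Lemma leUl x y : x ≤ x ⊔ y. Proof. exact: meetKU. Qed.
Lemma leUr x y : y ≤ x ⊔ y. Proof. by rewrite joinC; apply: leUl. Qed.

Lemma leU_lub x y z : x ≤ z -> y ≤ z -> x ⊔ y ≤ z.
Proof. by move=> /le_joinE xz /le_joinE yz; apply/le_joinE; rewrite -joinA yz xz. Qed.

Lemma le1_eq1 x : one ≤ x -> x = one.
Proof. exact/le_anti/lex1. Qed.

Lemma ler_mul2l x y z : x ≤ y -> z ⊙ x ≤ z ⊙ y.
Proof. by rewrite !(mulC z); apply: ler_mul2r. Qed.

Lemma mul_ler x y : x ⊙ y ≤ y.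
Proof. by rewrite -[X in _ ≤ X]mulx1 mulC; apply/ler_mul2l/lex1. Qed.

Lemma mul_lel x y : x ⊙ y ≤ x.
Proof. by rewrite mulC; apply: mul_ler. Qed.

Lemma mulUr_le x y z : x ⊙ (y ⊔ z) ≤ x ⊙ y ⊔ x ⊙ z.
Proof. by apply/residuation/leU_lub; apply/residuation; [apply: leUl | apply: leUr]. Qed.

Lemma le_of_one_le_imp x y : one ≤ x ⇒ y -> x ≤ y.
Proof. by move/residuation; rewrite mulx1. Qed.

Lemma join0x x : zero ⊔ x = x.
Proof. exact/le_joinE/le0x. Qed.

Lemma imp_mul x y z : x ⇒ (y ⇒ z) = x ⊙ y ⇒ z.
Proof.
have curry w : w ≤ x ⇒ (y ⇒ z) <-> w ≤ x ⊙ y ⇒ z.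
  split=> [/residuation/residuation le_w | le_w]; apply/residuation.
    by rewrite (mulC x) -mulA.
  by apply/residuation; rewrite mulA (mulC y); apply/residuation.
by apply: le_anti; [apply/curry | apply/curry]; apply: lexx.
Qed.

Lemma mul_rstar x : x ⊙ x^* = zero.
Proof. by apply/le_anti/le0x/residuation/lexx. Qed.

Lemma rstar1 : one^* = zero.
Proof.
by apply/le_anti/le0x; rewrite -[X in X ≤ _]mulx1 mulC; apply/residuation/lexx.
Qed.

Lemma rstar0 : zero^* = one.
Proof. by apply/le1_eq1/residuation; rewrite mulx1; apply: lexx. Qed.

Lemma mul_joinr_eq1 a b c : a ⊔ b = one -> c ⊔ b = one -> a ⊙ c ⊔ b = one.
Proof.
move=> ab cb; apply: le1_eq1.
have le_b x : x ⊙ b ≤ a ⊙ c ⊔ b := le_trans (mul_ler x b) (leUr _ _).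
have one_split : one ≤ (a ⊔ b) ⊙ c ⊔ (a ⊔ b) ⊙ b.
  by rewrite -{1}(mulx1 one) -{1}ab -cb; apply: mulUr_le.
apply: (le_trans one_split); apply: leU_lub => //.
rewrite mulC; apply: (le_trans (mulUr_le _ _ _)); apply: leU_lub => //.
by rewrite mulC; apply: leUl.
Qed.

Definition rpow a n := iter n (rmul A a) one.

Lemma rpow_le_add a i k : rpow a (i + k) ≤ rpow a i.
Proof.
elim: k => [|k IHk]; first by rewrite addn0; apply: lexx.
by rewrite addnS; apply: le_trans (mul_ler _ _) IHk.
Qed.

Lemma rpow_stationary a : exists n, rpow a n.+1 = rpow a n.
Proof.
pose stops (i : 'I_#|T|.+1) := rpow a i.+1 == rpow a i.
have [/existsP [i /eqP]|/existsPn never] := boolP [exists i, stops i]; first by exists i.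
have rpow_neq (i k : 'I_#|T|.+1) : (i < k)%N -> rpow a i <> rpow a k.
  move=> ik eq_ik; case/negP: (never (Ordinal (ltn_trans ik (ltn_ord k)))).
  rewrite /stops.
  have := rpow_le_add a i.+1 (k - i.+1); rewrite subnKC // -eq_ik.
  by move=> le_succ; apply/eqP/le_anti; first exact: mul_ler.
suff /leq_card : injective (fun i : 'I_#|T|.+1 => rpow a i) by rewrite card_ord ltnn.
move=> i k /= eq_ik; apply: val_inj; case: (ltngtP i k) => [ik | ki | //].
- by case: (rpow_neq _ _ ik eq_ik).
- by case: (rpow_neq _ _ ki (esym eq_ik)).
Qed.

Lemma rpow_join_eq1 a b n : a ⊔ b = one -> rpow a n ⊔ b = one.
Proof.
move=> ab; elim: n => [|n IHn] /=; last exact: mul_joinr_eq1.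
by rewrite joinC; apply/le_joinE/lex1.
Qed.

Lemma exists_idempotent_below a :
  exists2 e, idempotent A e /\ e ≤ a & forall b, a ⊔ b = one -> e ⊔ b = one.
Proof.
have [n stat] := rpow_stationary a.
have absorb : rpow a n ⊙ a = rpow a n by rewrite mulC.
have absorb_pow k : rpow a n ⊙ rpow a k = rpow a n.
  by elim: k => [|k IHk] /=; rewrite ?mulx1 // mulA absorb.
exists (rpow a n); last by move=> b; apply: rpow_join_eq1.
by split; [apply: absorb_pow | rewrite -absorb; apply: mul_ler].
Qed.

Hypothesis prelinear : forall x y, (x ⇒ y) ⊔ (y ⇒ x) = one.
Hypothesis divisible : forall x y, x ⊙ (x ⇒ y) = x ⊓ y.

Lemma total_of_idempotents_total :
  (forall e f, idempotent A e -> idempotent A f -> comparable A e f) ->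
  forall x y, comparable A x y.
Proof.
move=> idem_total x y.
have [e [e_id e_le] e_join] := exists_idempotent_below (x ⇒ y).
have [f [f_id f_le] f_join] := exists_idempotent_below (y ⇒ x).
have ef : e ⊔ f = one by apply: e_join; rewrite joinC f_join // joinC.
have [/le_joinE|/le_joinE] := idem_total e f e_id f_id.
- by rewrite ef => f1; right; apply: le_of_one_le_imp; rewrite f1.
- by rewrite joinC ef => e1; left; apply: le_of_one_le_imp; rewrite e1.
Qed.

Lemma total_iff_in_D_one : (forall x y, comparable A x y) <-> in_D A one.
Proof.
split=> [total | [_ [_ below_one]]].
  by split; [apply: mulx1 | split=> *; apply: total].
by apply: total_of_idempotents_total => e f e_id f_id; apply: below_one.
Qed.

(* With q = e*, prelinearity splits q as q ⊙ ((e ⇒ q) ⊔ (q ⇒ e)); since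
   e ⇒ q = q, the first part is q ⊙ q, and the second is q ⊓ e = 0. *)
Lemma rstar_idempotent e : idempotent A e -> idempotent A e^*.
Proof.
move=> e_id; have e_imp_rstar : e ⇒ e^* = e^* by rewrite /rstar imp_mul e_id.
have orth : e^* ⊙ (e^* ⇒ e) = zero.
  by rewrite divisible meetC -divisible e_imp_rstar mul_rstar.
apply: le_anti; first exact: mul_lel.
have := mulUr_le e^* (e ⇒ e^*) (e^* ⇒ e).
by rewrite prelinear mulx1 orth e_imp_rstar joinC join0x.
Qed.

Lemma in_D_rstar_eq0 p : in_D A p -> p <> zero -> p^* = zero.
Proof.
move=> [p_id [p_comp _]] p0; have q_id := rstar_idempotent p_id.
case: (p_comp _ q_id) => [p_le | le_p].
- by case: p0; apply/le_anti/le0x; rewrite -p_id -(mul_rstar p); apply: ler_mul2l.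
- by apply/le_anti/le0x; rewrite -q_id -(mul_rstar p); apply: ler_mul2r.
Qed.

End BLAlgebra.

Theorem proposition1p11 (T : finType) (A : rl_ops T) (p : T) :
  BL_comet_with_pivot A p ->
  (BL_chain A <-> rstar A (rstar A p) = p).
Proof.
move=> [BL [[pD pmax] p0]]; have [RL [prelinear divisible]] := BL.
split=> [[_ /(total_iff_in_D_one RL prelinear) one_D] | pp].
- have -> : p = rone A by apply/(le1_eq1 RL)/pmax.
  by rewrite (rstar1 RL) (rstar0 RL).
- have p1 : p = rone A.
    by rewrite -pp (in_D_rstar_eq0 RL prelinear divisible pD p0) (rstar0 RL).
  by split; last by apply/(total_iff_in_D_one RL prelinear); rewrite -p1.
Qed.
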